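(* Let $S$ be an inverse monoid and $(X,E(S),p)$ a (global) presheaf of geodesic metric spaces on which $S$ acts properly and coboundedly. Then $S$ is quasi-finitely generated, i.e. there is a finite subset $\mathcal M\subseteq S$ with $\mathcal M=\mathcal M^{-1}$ such that $S$ is generated as a semigroup by $\mathcal M\cup E(S)$.
   Context: An inverse monoid is a monoid $S$ (identity $1$) in which every $s$ has a unique $s^{-1}$ with $ss^{-1}s=s$, $s^{-1}ss^{-1}=s^{-1}$; $E(S)$ is its set of idempotents, a meet-semilattice with meet $ef$. Presheaf: a set $X$ with maps $p\colon X\to E(S)$ and $X\times E(S)\to X$ such that $(x\cdot e)\cdot f=x\cdot ef$, $x\cdot p(x)=x$, $p(x\cdot e)=p(x)e$; fibers $X_e=p^{-1}(e)$. A (global) presheaf of metric spaces additionally has $p$ surjective, each $X_e$ a metric space $d_e$, and $d_e(x,y)\ge d_{ef}(x\cdot f,y\cdot f)$ for $x,y\in X_e$; $d(x,y)=d_e(x,y)$ for $x,y\in X_e$ and $\infty$ across fibers. Geodesic: finite distances $D$ are realised by isometric embeddings of $[0,D]$. Action: a right action $X\times S\to X$ extending the presheaf map on $E(S)$, with $p(x\cdot s)=s^{-1}p(x)s$ and $d_e(x,y)\ge d_{s^{-1}es}(x\cdot s,y\cdot s)$ for $x,y\in X_e$. Proper: for every $y_1\in X_1$ and $R\ge0$ there is a finite $\mathcal C\subseteq S$ with $\{s: d(y_1\cdot s,y_1\cdot s^{-1}s)\le R\}\subseteq\{ce: c\in\mathcal C,e\in E(S)\}$. Cobounded: there are $x_1\in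 X_1$, $T\ge0$ such that every point of $X$ equals $y\cdot s$ for some $s\in S$ and $y$ with $d(x_1,y)\le T$. *)

From Stdlib Require Import Reals Lra List.
Open Scope R_scope.
Set Implicit Arguments.

Record InverseMonoid := {
  im_car :> Type;
  im_mul : im_car -> im_car -> im_car;
  im_one : im_car;
  im_inv : im_car -> im_car;
  im_assoc : forall a b c, im_mul a (im_mul b c) = im_mul (im_mul a b) c;
  im_one_l : forall a, im_mul im_one a = a;
  im_one_r : forall a, im_mul a im_one = a;
  im_inv_1 : forall s, im_mul (im_mul s (im_inv s)) s = s;
  im_inv_2 : forall s, im_mul (im_mul (im_inv s) s) (im_inv s) = im_inv s;
  im_inv_uniq : forall s t, im_mul (im_mul s t) s = s ->
                  im_mul (im_mul t s) t = t -> t = im_inv s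
}.

Definition idempotent {S : InverseMonoid} (e : im_car S) : Prop := im_mul S e e = e.

(** * Presheaves of metric spaces with an action of S.
    The distance [dist] is a real-valued function; it is only meaningful
    on pairs in the same fiber (d = +infinity across fibers). *)
Record PresheafAction (S : InverseMonoid) := {
  pa_X :> Type;
  pa_p : pa_X -> S;
  pa_act : pa_X -> S -> pa_X;
  pa_dist : pa_X -> pa_X -> R;
  (* p lands in E(S) and is surjective onto E(S) (global presheaf) *)
  pa_p_idem : forall x, idempotent (pa_p x);
  pa_p_surj : forall e : S, idempotent e -> exists x, pa_p x = e;
  pa_res_comp : forall x e f, idempotent e -> idempotent f ->
      pa_act (pa_act x e) f = pa_act x (im_mul S e f);
  pa_res_p : forall x, pa_act x (pa_p x) = x;
  pa_res_fiber : forall x e, idempotent e ->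
      pa_p (pa_act x e) = im_mul S (pa_p x) e;
  pa_d_nonneg : forall x y, pa_p x = pa_p y -> 0 <= pa_dist x y;
  pa_d_zero : forall x y, pa_p x = pa_p y -> (pa_dist x y = 0 <-> x = y);
  pa_d_sym : forall x y, pa_p x = pa_p y -> pa_dist x y = pa_dist y x;
  pa_d_tri : forall x y z, pa_p x = pa_p y -> pa_p y = pa_p z ->
      pa_dist x z <= pa_dist x y + pa_dist y z;
  pa_res_lip : forall x y f, pa_p x = pa_p y -> idempotent f ->
      pa_dist (pa_act x f) (pa_act y f) <= pa_dist x y;
  pa_act_comp : forall x s t, pa_act (pa_act x s) t = pa_act x (im_mul S s t);
  pa_act_fiber : forall x s,
      pa_p (pa_act x s) = im_mul S (im_mul S (im_inv S s) (pa_p x)) s;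
  pa_act_lip : forall x y s, pa_p x = pa_p y ->
      pa_dist (pa_act x s) (pa_act y s) <= pa_dist x y
}.

Section Props.
Variable S : InverseMonoid.
Variable X : PresheafAction S.

(** finite distance at most r (d(x,y) <= r, with d = oo across fibers) *)
Definition dle (x y : X) (r : R) : Prop :=
  pa_p X x = pa_p X y /\ pa_dist X x y <= r.

Definition geodesic : Prop :=
  forall x y : X, pa_p X x = pa_p X y ->
    exists g : R -> X, g 0 = x /\ g (pa_dist X x y) = y /\
      forall t u, 0 <= t <= pa_dist X x y -> 0 <= u <= pa_dist X x y ->
        pa_p X (g t) = pa_p X x /\ pa_dist X (g t) (g u) = Rabs (t - u).

Definition proper_action : Prop :=
  forall (y1 : X) (r : R), pa_p X y1 = im_one S -> 0 <= r ->
    exists C : list S, forall s : S,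
      dle (pa_act X y1 s) (pa_act X y1 (im_mul S (im_inv S s) s)) r ->
      exists c e, In c C /\ idempotent e /\ s = im_mul S c e.

Definition cobounded_action : Prop :=
  exists (x1 : X) (T : R), pa_p X x1 = im_one S /\ 0 <= T /\
    forall x : X, exists (s : S) (y : X), dle x1 y T /\ x = pa_act X y s.
End Props.

Definition prod_ne {S : InverseMonoid} (a : S) (l : list S) : S :=
  fold_left (im_mul S) l a.

Definition semigroup_generated_by {S : InverseMonoid} (G : S -> Prop) : Prop :=
  forall s : S, exists (a : S) (l : list S),
    G a /\ Forall G l /\ s = prod_ne a l.

Definition quasi_finitely_generated (S : InverseMonoid) : Prop :=
  exists M : list S,
    (forall m, In m M <-> In (im_inv S m) M) /\
    semigroup_generated_by (S:=S) (fun s : S => In s M \/ idempotent s).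

From Stdlib Require Import Reals List Lra.

(* A Švarc–Milnor argument.  Pick a base point x1 in the top fibre X_1 whose
   S-orbit is T-dense, and let C be the finite set given by properness for the
   radius 2T + 1.  If x1.t and x1.t' are (2T + 1)-close then t' = c e t with
   c in C and e idempotent.  For s in S, the points x1.(s^-1 s) and x1.s lie in
   one fibre; a geodesic between them, cut into unit steps, is shadowed by a
   sequence of orbit points whose consecutive members are (2T + 1)-close, so s
   is a product of elements of C and idempotents, starting from s^-1 s. *)

Section InverseMonoidFacts.
Context {S : InverseMonoid}.

Lemma im_inv_inv (a : S) : im_inv S (im_inv S a) = a.
Proof. symmetry; apply im_inv_uniq; [apply im_inv_2 | apply im_inv_1]. Qed.

Lemma idempotent_mul_inv (s : S) : idempotent (im_mul S s (im_inv S s)).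
Proof. unfold idempotent; rewrite im_assoc, im_inv_1; reflexivity. Qed.

Lemma idempotent_inv_mul (s : S) : idempotent (im_mul S (im_inv S s) s).
Proof. unfold idempotent; rewrite im_assoc, im_inv_2; reflexivity. Qed.

Lemma prod_ne_mul_l (x a : S) (l : list S) :
  prod_ne (im_mul S x a) l = im_mul S x (prod_ne a l).
Proof.
  unfold prod_ne; revert a; induction l as [|b l IH]; intro a; simpl.
  - reflexivity.
  - rewrite <- im_assoc; apply IH.
Qed.

Lemma in_app_map_inv (C : list S) (m : S) :
  In m (C ++ map (im_inv S) C) -> In (im_inv S m) (C ++ map (im_inv S) C).
Proof.
  intro Hm; apply in_or_app; destruct (in_app_or _ _ _ Hm) as [HC | Hinv].
  - right; apply in_map; exact HC.
  - left; apply in_map_iff in Hinv; destruct Hinv as (c & <- & Hc).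
    rewrite im_inv_inv; exact Hc.
Qed.

Lemma app_map_inv_closed (C : list S) (m : S) :
  In m (C ++ map (im_inv S) C) <-> In (im_inv S m) (C ++ map (im_inv S) C).
Proof.
  split; [apply in_app_map_inv |].
  intro Hm; rewrite <- (im_inv_inv m); apply in_app_map_inv; exact Hm.
Qed.

Definition semigroup_span (G : S -> Prop) (s : S) : Prop :=
  exists a l, G a /\ Forall G l /\ s = prod_ne a l.

Lemma semigroup_span_gen (G : S -> Prop) (a : S) : G a -> semigroup_span G a.
Proof. intro Ga; exists a, nil; repeat split; [exact Ga | constructor]. Qed.

Lemma semigroup_span_mul_l (G : S -> Prop) (a t : S) :
  G a -> semigroup_span G t -> semigroup_span G (im_mul S a t).
Proof.
  intros Ga (b & l & Gb & Gl & ->).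
  exists a, (b :: l); repeat split; [exact Ga | constructor; assumption |].
  unfold prod_ne at 2; simpl; fold (prod_ne (im_mul S a b) l).
  symmetry; apply prod_ne_mul_l.
Qed.

End InverseMonoidFacts.

Section PresheafFacts.
Context {S : InverseMonoid} {X : PresheafAction S}.

Lemma dle_le {x y : X} {a b : R} : dle X x y a -> a <= b -> dle X x y b.
Proof. intros [Hp Hd] Hab; split; [exact Hp | lra]. Qed.

Lemma dle_refl (x : X) (r : R) : 0 <= r -> dle X x x r.
Proof.
  intro Hr; split; [reflexivity |].
  rewrite (proj2 (pa_d_zero X x x eq_refl) eq_refl); exact Hr.
Qed.

Lemma dle_sym (x y : X) (r : R) : dle X x y r -> dle X y x r.
Proof. intros [Hp Hd]; split; [symmetry; exact Hp | rewrite pa_d_sym; auto]. Qed.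

Lemma dle_trans (x y z : X) (a b : R) :
  dle X x y a -> dle X y z b -> dle X x z (a + b).
Proof.
  intros [Hxy Da] [Hyz Db]; split; [congruence |].
  pose proof (pa_d_tri X x y z Hxy Hyz); lra.
Qed.

Lemma dle_act (x y : X) (s : S) (r : R) :
  dle X x y r -> dle X (pa_act X x s) (pa_act X y s) r.
Proof.
  intros [Hp Hd]; split.
  - rewrite !pa_act_fiber, Hp; reflexivity.
  - eapply Rle_trans; [apply pa_act_lip; exact Hp | exact Hd].
Qed.

Lemma pa_p_act_top (x1 : X) (s : S) :
  pa_p X x1 = im_one S -> pa_p X (pa_act X x1 s) = im_mul S (im_inv S s) s.
Proof. intro Hx1; rewrite pa_act_fiber, Hx1, im_one_r; reflexivity. Qed.

Lemma pa_p_res_top (x1 : X) (e : S) :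
  pa_p X x1 = im_one S -> idempotent e -> pa_p X (pa_act X x1 e) = e.
Proof. intros Hx1 He; rewrite pa_res_fiber, Hx1, im_one_l by exact He; reflexivity. Qed.

Lemma cobounded_orbit_near {x1 : X} {T : R} :
  (forall x : X, exists s y, dle X x1 y T /\ x = pa_act X y s) ->
  forall x : X, exists t, dle X (pa_act X x1 t) x T.
Proof.
  intros Hcov x; destruct (Hcov x) as (s & y & Hy & ->).
  exists s; apply dle_act; exact Hy.
Qed.

Lemma geodesic_unit_chain {x y : X} :
  geodesic X -> pa_p X x = pa_p X y ->
  exists (n : nat) (z : nat -> X),
    z O = x /\ z n = y /\ forall k, dle X (z k) (z (Nat.succ k)) 1.
Proof.
  intros Hgeo Hxy; destruct (Hgeo x y Hxy) as (g & Hg0 & HgD & Hg).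
  set (D := pa_dist X x y) in *.
  assert (HD : 0 <= D) by (apply pa_d_nonneg; exact Hxy).
  assert (Hrange : forall k : nat, 0 <= Rmin (INR k) D <= D).
  { intro k; pose proof (pos_INR k); unfold Rmin; destruct Rle_dec; lra. }
  destruct (INR_unbounded D) as [n Hn].
  exists n, (fun k => g (Rmin (INR k) D)); split; [| split].
  - simpl; rewrite Rmin_left by exact HD; exact Hg0.
  - rewrite Rmin_right by lra; exact HgD.
  - intro k.
    destruct (Hg _ _ (Hrange k) (Hrange (Nat.succ k))) as [Hpk Hdk].
    destruct (Hg _ _ (Hrange (Nat.succ k)) (Hrange k)) as [HpSk _].
    split; [congruence |]; rewrite Hdk, S_INR.
    pose proof (pos_INR k).
    unfold Rmin; destruct (Rle_dec (INR k)); destruct (Rle_dec (INR k + 1));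
      unfold Rabs; destruct Rcase_abs; lra.
Qed.

Lemma proper_translate {x1 : X} {C : list S} {r : R} {t t' : S} :
  pa_p X x1 = im_one S ->
  (forall s, dle X (pa_act X x1 s) (pa_act X x1 (im_mul S (im_inv S s) s)) r ->
     exists c e, In c C /\ idempotent e /\ s = im_mul S c e) ->
  dle X (pa_act X x1 t) (pa_act X x1 t') r ->
  exists c e, In c C /\ idempotent e /\ t' = im_mul S (im_mul S c e) t.
Proof.
  intros Hx1 HC Htt'.
  assert (Hfib : im_mul S (im_inv S t) t = im_mul S (im_inv S t') t').
  { destruct Htt' as [Hp _]; rewrite !pa_p_act_top in Hp by exact Hx1; exact Hp. }
  set (m := im_mul S t' (im_inv S t)); set (f := im_mul S t (im_inv S t)).
  assert (Hmf : dle X (pa_act X x1 m) (pa_act X x1 f) r).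
  { unfold m, f; rewrite <- !pa_act_comp; apply dle_act, dle_sym; exact Htt'. }
  assert (Hm : im_mul S (im_inv S m) m = f).
  { destruct Hmf as [Hp _].
    rewrite pa_p_act_top, pa_p_res_top in Hp by (exact Hx1 || apply idempotent_mul_inv).
    exact Hp. }
  rewrite <- Hm in Hmf; destruct (HC m Hmf) as (c & e & Hc & He & Hce).
  exists c, e; repeat split; [exact Hc | exact He |].
  rewrite <- Hce; unfold m; rewrite <- im_assoc, Hfib, im_assoc, im_inv_1; reflexivity.
Qed.

Lemma semigroup_span_translate {x1 : X} {C : list S} {r : R} (G : S -> Prop) :
  pa_p X x1 = im_one S ->
  (forall s, dle X (pa_act X x1 s) (pa_act X x1 (im_mul S (im_inv S s) s)) r ->
     exists c e, In c C /\ idempotent e /\ s = im_mul S c e) ->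
  (forall c, In c C -> G c) -> (forall e, idempotent e -> G e) ->
  forall t t', semigroup_span G t ->
  dle X (pa_act X x1 t) (pa_act X x1 t') r -> semigroup_span G t'.
Proof.
  intros Hx1 HC GC Gidem t t' Ht Htt'.
  destruct (proper_translate Hx1 HC Htt') as (c & e & Hc & He & ->).
  rewrite <- im_assoc; apply semigroup_span_mul_l; [apply GC; exact Hc |].
  apply semigroup_span_mul_l; [apply Gidem; exact He | exact Ht].
Qed.

End PresheafFacts.

Section OrbitShadow.
Context {S : InverseMonoid} {X : PresheafAction S} {x1 : X} {T : R}.
Hypothesis orbit_near : forall x : X, exists t, dle X (pa_act X x1 t) x T.
Context {P : S -> Prop}.
Hypothesis P_step : forall t t',
  P t -> dle X (pa_act X x1 t) (pa_act X x1 t') (T + 1 + T) -> P t'.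

Lemma unit_chain_shadow (z : nat -> X) (n : nat) :
  (forall k, dle X (z k) (z (Nat.succ k)) 1) ->
  (exists t, P t /\ dle X (pa_act X x1 t) (z O) T) ->
  exists t, P t /\ dle X (pa_act X x1 t) (z n) T.
Proof.
  intros Hz Hstart; induction n as [|k IH]; [exact Hstart |].
  destruct IH as (t & Pt & Ht); destruct (orbit_near (z (Nat.succ k))) as [t' Ht'].
  exists t'; split; [| exact Ht'].
  apply P_step with t; [exact Pt |].
  apply dle_trans with (z (Nat.succ k)); [apply dle_trans with (z k) |]; auto.
  apply dle_sym; exact Ht'.
Qed.

Lemma orbit_step_closure_total :
  geodesic X -> pa_p X x1 = im_one S -> 0 <= T ->
  (forall e, idempotent e -> P e) -> forall s, P s.
Proof.
  intros Hgeo Hx1 HT P_idem s.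
  set (e := im_mul S (im_inv S s) s).
  assert (He : idempotent e) by apply idempotent_inv_mul.
  assert (Hfib : pa_p X (pa_act X x1 e) = pa_p X (pa_act X x1 s))
    by (rewrite pa_p_res_top, pa_p_act_top by assumption; reflexivity).
  destruct (geodesic_unit_chain Hgeo Hfib) as (n & z & Hz0 & Hzn & Hz).
  destruct (unit_chain_shadow z n Hz) as (t & Ht & Htz).
  - exists e; split; [apply P_idem; exact He |].
    rewrite Hz0; apply dle_refl; exact HT.
  - apply P_step with t; [exact Ht |].
    rewrite Hzn in Htz; apply (dle_le Htz); lra.
Qed.

End OrbitShadow.

Theorem corollary3p7 (S : InverseMonoid) (X : PresheafAction S) :
  geodesic X -> proper_action X -> cobounded_action X ->
  quasi_finitely_generated S.
Proof.
  intros Hgeo Hprop (x1 & T & Hx1 & HT & Hcov).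
  destruct (Hprop x1 (T + 1 + T) Hx1 ltac:(lra)) as [C HC].
  exists (C ++ map (im_inv S) C); split; [apply app_map_inv_closed |].
  set (G := fun s : S => In s (C ++ map (im_inv S) C) \/ idempotent s).
  assert (G_C : forall c, In c C -> G c)
    by (intros c Hc; left; apply in_or_app; left; exact Hc).
  assert (G_idem : forall e, idempotent e -> G e) by (intros e He; right; exact He).
  intro s; apply (orbit_step_closure_total (cobounded_orbit_near Hcov)
                    (semigroup_span_translate G Hx1 HC G_C G_idem) Hgeo Hx1 HT).
  intros e He; apply semigroup_span_gen, G_idem, He.
Qed.
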